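(* (a) If $p\ne0$ and $(p',u')=\Phi(p,u)$, then $p'u'+u'=pu+p$. (b) Consequently, for any trajectory $(p_j,u_j)=\Phi(p_{j-1},u_{j-1})$ one has $p_ju_j+u_j=p_{j-1}u_{j-1}+p_{j-1}$. (c) For the trajectory $T_n$ (with coordinates $(p_j,u_j)$, $0\le j\le n$) and $1\le\ell\le n$, $\sum_{j=1}^{\ell}(p_{j-1}-u_j)=p_\ell u_\ell$.
   Context: $\Phi$ is the partial map of $\mathbb{R}^2$ defined for $p\ne0$ by $\Phi(p,u)=\bigl(p^2(u+1)-1,\ 1/p\bigr)$. For $n\ge1$, the trajectory $T_n$ is the (existing and unique) finite sequence $(p_j,u_j)$, $j=0,\dots,n$, with $(p_j,u_j)=\Phi(p_{j-1},u_{j-1})$ for $1\le j\le n$, $u_0=0$, $p_n=0$, and $p_j>0$ for $0\le j\le n-1$. *)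

From Stdlib Require Import Reals.
Open Scope R_scope.

(* The partial map Phi(p,u) = (p^2 (u+1) - 1, 1/p); only meaningful for p <> 0
   (every use below carries the hypothesis p <> 0). *)
Definition Phi (p u : R) : R * R := (p ^ 2 * (u + 1) - 1, / p).

(* (p_j,u_j)_{0<=j<=n}, given as functions nat -> R (values beyond n irrelevant),
   is the trajectory T_n. *)
Definition IsTrajectory (n : nat) (p u : nat -> R) : Prop :=
  u 0%nat = 0 /\ p n = 0 /\
  (forall j : nat, (j < n)%nat -> 0 < p j) /\
  (forall j : nat, (1 <= j <= n)%nat ->
     p (j - 1)%nat <> 0 /\ (p j, u j) = Phi (p (j - 1)%nat) (u (j - 1)%nat)).

(* Since [1/p * (p^2 (u+1) - 1) + 1/p = p u + p], each step of [Phi] gives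
   [p_{j-1} - u_j = p_j u_j - p_{j-1} u_{j-1}], so the sum in (c) telescopes
   down to [p_l u_l - p_0 u_0 = p_l u_l]. *)

From Stdlib Require Import Reals Lra Lia.
Open Scope R_scope.

Lemma Phi_conserved (p u p' u' : R) :
  p <> 0 -> (p', u') = Phi p u -> p' * u' + u' = p * u + p.
Proof.
  intros Hp HPhi. unfold Phi in HPhi. injection HPhi as -> ->.
  field. exact Hp.
Qed.

Lemma sum_telescope_conserved (p u : nat -> R) (m : nat) :
  u 0%nat = 0 ->
  (forall k, (k <= m)%nat -> p (S k) * u (S k) + u (S k) = p k * u k + p k) ->
  sum_f_R0 (fun k => p k - u (S k)) m = p (S m) * u (S m).
Proof.
  intros Hu0 Hstep. induction m as [|m IH]; simpl.
  - specialize (Hstep 0%nat (le_n 0)). rewrite Hu0 in Hstep. lra.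
  - rewrite IH by (intros k Hk; apply Hstep; lia).
    specialize (Hstep (S m) (le_n _)). lra.
Qed.

Lemma IsTrajectory_conserved (n : nat) (p u : nat -> R) :
  IsTrajectory n p u ->
  forall k, (k < n)%nat -> p (S k) * u (S k) + u (S k) = p k * u k + p k.
Proof.
  intros [_ [_ [_ Hstep]]] k Hk.
  destruct (Hstep (S k) ltac:(lia)) as [Hp HPhi].
  rewrite Nat.sub_1_r in Hp, HPhi; simpl in Hp, HPhi.
  exact (Phi_conserved _ _ _ _ Hp HPhi).
Qed.

Theorem lemma1 :
  (* (a) *)
  (forall p u p' u' : R, p <> 0 -> (p', u') = Phi p u ->
     p' * u' + u' = p * u + p) /\
  (* (b) *)
  (forall (p u : nat -> R) (j : nat), (1 <= j)%nat -> p (j - 1)%nat <> 0 ->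
     (p j, u j) = Phi (p (j - 1)%nat) (u (j - 1)%nat) ->
     p j * u j + u j = p (j - 1)%nat * u (j - 1)%nat + p (j - 1)%nat) /\
  (* (c) sum_{j=1}^{l} (p_{j-1} - u_j), written as sum_{k=0}^{l-1} (p_k - u_{k+1}) *)
  (forall (n : nat) (p u : nat -> R), (1 <= n)%nat -> IsTrajectory n p u ->
     forall l : nat, (1 <= l <= n)%nat ->
       sum_f_R0 (fun k => p k - u (S k)) (l - 1)%nat = p l * u l).
Proof.
  split; [exact Phi_conserved |].
  split.
  - intros p u j _. apply Phi_conserved.
  - intros n p u _ Htraj l Hl.
    replace l with (S (l - 1)) at 2 3 by lia.
    apply sum_telescope_conserved; [apply Htraj |].
    intros k Hk. apply (IsTrajectory_conserved n); [exact Htraj | lia].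
Qed.
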